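(* Let $\Theta$ be a typed signature. For every $\chi\in\mathcal L_{\mathrm{CL}}(P_\Theta)$: $\chi$ is true at every state of every coherent propositional coalition model over $P_\Theta$ iff $\vdash_{\mathrm{CL}_{\mathrm{Coh},\Theta}}\chi$.
   Context: A typed signature is $\Theta=(\mathrm{Ag},X,\{D_x\}_{x\in X})$ with $\mathrm{Ag}$ a finite non-empty set of agents, $X$ a finite set of variables, each $D_x$ finite non-empty. $P_\Theta=\{p_x^c\mid x\in X,c\in D_x\}$ distinct atoms; $\mathcal L_{\mathrm{CL}}(P_\Theta)$: $\chi::=\top\mid p\mid\neg\chi\mid\chi\wedge\chi'\mid[C]\chi$ ($p\in P_\Theta,C\subseteq\mathrm{Ag}$). A propositional coalition model (explicit one-step game form model) is $(S,\{\Sigma_i\}_{i\in\mathrm{Ag}},o,V)$ with $S\neq\varnothing$, each $\Sigma_i\neq\varnothing$, $o:S\times\Sigma_{\mathrm{Ag}}\to S$ where $\Sigma_C=\prod_{i\in C}\Sigma_i$, and $V:P_\Theta\to\mathcal P(S)$; $p$ true at $s$ iff $s\in V(p)$; $[C]\chi$ true at $s$ iff $\exists\alpha_C\in\Sigma_C\,\forall\beta_{\mathrm{Ag}\setminus C}$: $\chi$ true at $o(s,\alpha_C\sqcup\beta)$. It is coherent if every state satisfies $\bigwedge_{x\in X}\bigl((\bigvee_{c\in D_x}p_x^c)\wedge\bigwedge_{c\neq d}(p_x^c\to\neg p_x^d)\bigr)$. $\mathrm{CL}_{\mathrm{Coh},\Theta}$ is the Hilbert system with: all instances of propositional tautologies;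 (C1) $[C](\varphi\wedge\psi)\to[C]\varphi$; (C2) $\neg[C]\bot$; (C3) $[C]\top$; (C4) $[C]\varphi\wedge[D]\psi\to[C\cup D](\varphi\wedge\psi)$ for disjoint $C,D$; (C5) $\neg[\varnothing]\neg\varphi\to[\mathrm{Ag}]\varphi$; $\bigvee_{c\in D_x}p_x^c$ for each $x$; $p_x^c\to\neg p_x^d$ for distinct $c,d\in D_x$; rules MP and RE (from $\vdash\varphi\leftrightarrow\psi$ infer $\vdash[C]\varphi\leftrightarrow[C]\psi$). *)

From mathcomp Require Import all_boot.
Set Implicit Arguments.
Unset Printing Implicit Defensive.

Section CL.
Variables (Ag X : finType) (D : X -> finType).

(* L_CL(P_Theta); atoms p_x^c are  Atom x c *)
Inductive form : Type :=
  | Top : form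
  | Atom : forall x : X, D x -> form
  | Neg : form -> form
  | And : form -> form -> form
  | Box : {set Ag} -> form -> form.

Definition Bot : form := Neg Top.
Definition Or (a b : form) : form := Neg (And (Neg a) (Neg b)).
Definition Imp (a b : form) : form := Neg (And a (Neg b)).
Definition Iff (a b : form) : form := And (Imp a b) (Imp b a).
Definition bigOr (l : seq form) : form := foldr Or Bot l.

(* Instances of propositional tautologies: formulas true under every
   Boolean valuation of their maximal non-Boolean subformulas
   (atoms and [C]-formulas). *)
Fixpoint peval (v : form -> bool) (f : form) : bool :=
  match f with
  | Top => true
  | Atom _ _ => v f
  | Neg a => ~~ peval v a
  | And a b => peval v a && peval v b
  | Box _ _ => v f
  end.
Definition ptaut (f : form) : Prop := forall v, peval v f.

Inductive derivable : form -> Prop :=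
  | d_taut f : ptaut f -> derivable f
  | d_C1 (C : {set Ag}) a b : derivable (Imp (Box C (And a b)) (Box C a))
  | d_C2 (C : {set Ag}) : derivable (Neg (Box C Bot))
  | d_C3 (C : {set Ag}) : derivable (Box C Top)
  | d_C4 (C E : {set Ag}) a b : [disjoint C & E] ->
      derivable (Imp (And (Box C a) (Box E b)) (Box (C :|: E) (And a b)))
  | d_C5 a : derivable (Imp (Neg (Box set0 (Neg a))) (Box setT a))
  | d_cov (x : X) : derivable (bigOr [seq @Atom x c | c <- enum (D x)])
  | d_excl (x : X) (c d : D x) : c != d -> derivable (Imp (@Atom x c) (Neg (@Atom x d)))
  | d_MP a b : derivable a -> derivable (Imp a b) -> derivable b
  | d_RE (C : {set Ag}) a b : derivable (Iff a b) -> derivable (Iff (Box C a) (Box C b)).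

Record model : Type := Model {
  St : Type;
  St_inh : inhabited St;
  Strat : Ag -> Type;
  Strat_inh : forall i, inhabited (Strat i);
  out : St -> (forall i : Ag, Strat i) -> St;
  val : forall x : X, D x -> St -> Prop
}.

Definition join (M : model) (C : {set Ag})
  (alpha : forall i, i \in C -> Strat M i)
  (beta : forall i, i \notin C -> Strat M i) : forall i, Strat M i :=
  fun i => match (i \in C) as b return ((i \in C) = b -> Strat M i) with
           | true => fun h => alpha i h
           | false => fun h => beta i (negbT h)
           end erefl.

Fixpoint truth (M : model) (s : St M) (f : form) : Prop :=
  match f with
  | Top => True
  | Atom x c => @val M x c s
  | Neg a => ~ truth M s a
  | And a b => truth M s a /\ truth M s b
  | Box C a => exists alpha : (forall i, i \in C -> Strat M i),
                 forall beta : (forall i, i \notin C -> Strat M i),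
                   truth M (out M s (@join M C alpha beta)) a
  end.

Definition coherent (M : model) : Prop :=
  forall (s : St M) (x : X),
    (exists c : D x, @val M x c s) /\
    (forall c d : D x, c != d -> @val M x c s -> ~ @val M x d s).

End CL.

(* Soundness is checked axiom by axiom; C4 merges the two coalitions'
   strategies, which is possible because the coalitions are disjoint.

   Completeness uses a canonical model in the style of Pauly.  States are
   maximal consistent sets.  A strategy of an agent names a claim (C, f) it
   backs, a claim (C', f') it vetoes, and a natural number; the numbers summed
   modulo |Ag| designate a dictator.  Given a state G and a profile, the
   outcome is some maximal consistent extension of
     { f  | [C]f is in G and every member of C backs (C, f) }
   together with
     { ~f' | the dictator vetoes (C', f'), ~[C']f' is in G, and every backed
             coalition is included in C' }.
   Backed claims have pairwise disjoint or equal coalitions, so C4 and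
   monotonicity make this set consistent.  If [C]f is in G, the members of C
   force f by backing (C, f).  If not, either C = Ag and C5 gives [{}]~f, a
   claim that is backed vacuously, or some agent outside C bids itself into
   dictatorship and vetoes (C, f). *)

From HB Require Import structures.
From Pilot Require Import Defs.
From mathcomp Require Import all_boot boolp.
From mathcomp Require classical_sets.

Set Implicit Arguments.
Unset Strict Implicit.
Unset Printing Implicit Defensive.

(* Classical equality on formulas, so that premise lists can use [\in]. *)
HB.instance Definition _ (Ag X : finType) (D : X -> finType) :=
  gen_eqMixin (@form Ag X D).

Local Ltac case_bools :=
  repeat match goal with
  | |- context [@peval _ _ _ ?v ?f] => case: (peval v f)
  | |- context [all ?p ?l] => case: (all p l)
  | |- context [?v (@Box _ _ _ ?C ?f)] => case: (v (Box C f))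
  end.

Lemma exists_seq_preimage (T U : eqType) (P : T -> Prop) (f : T -> U) (l : seq U) :
  {in l, forall y, exists2 x, P x & y = f x} ->
  exists2 xs, {in xs, forall x, P x} & l = map f xs.
Proof.
elim: l => [|y l IHl] Pl; first by exists [::].
have [|xs Pxs ->] := IHl; first by move=> z zl; apply: Pl; rewrite inE zl orbT.
have [x Px ->] := Pl y (mem_head _ _).
by exists (x :: xs) => // z /[!inE]/orP[/eqP->|/Pxs].
Qed.

Lemma chain_cover (T : eqType) (T0 : T -> Prop) (F : (T -> Prop) -> Prop) (l : seq T) :
  classical_sets.total_on F classical_sets.subset ->
  {in l, forall g, T0 g \/ exists2 Y, F Y & Y g} ->
  {in l, forall g, T0 g} \/ exists2 Y, F Y & {in l, forall g, T0 g \/ Y g}.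
Proof.
move=> Ftot; elim: l => [|a l IHl] al; first by left.
have /IHl IH : {in l, forall g, T0 g \/ exists2 Y, F Y & Y g}.
  by move=> g gl; apply: al; rewrite inE gl orbT.
case: (al a (mem_head _ _)) => [T0a|[Z FZ Za]].
  case: IH => [lT0|[Y FY lY]]; [left|right; exists Y => //];
    move=> g /[!inE]/orP[/eqP->|gl]; auto.
right; case: IH => [lT0|[Y FY lY]].
  by exists Z => // g /[!inE]/orP[/eqP->|/lT0]; auto.
case: (Ftot Y Z FY FZ) => [YZ|ZY]; [exists Z|exists Y] => // g /[!inE]/orP[/eqP->|/lY[]]; auto.
Qed.

Section CoalitionLogic.
Variables (Ag X : finType) (D : X -> finType).
Local Notation form := (@form Ag X D).
Local Notation Top := (@Top Ag X D).
Local Notation Bot := (@Bot Ag X D).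
Local Notation Atom := (@Atom Ag X D).
Local Notation derivable := (@derivable Ag X D).
Local Notation peval := (@peval Ag X D).

Definition bigAnd (l : seq form) : form := foldr (@And _ _ _) Top l.

Lemma peval_bigAnd v l : peval v (bigAnd l) = all (peval v) l.
Proof. by elim: l => //= a l ->. Qed.

Lemma taut_closure (P : form -> Prop) :
  (forall f, ptaut f -> P f) -> (forall a b, P a -> P (Imp a b) -> P b) ->
  forall l f, {in l, forall g, P g} -> (forall v, all (peval v) l -> peval v f) -> P f.
Proof.
move=> Ptaut Pmp; elim=> [|a l IHl] f Pl lf; first by apply: Ptaut => v; apply: lf.
apply: Pmp (Pl a (mem_head _ _)) _; apply: IHl => [g gl|v /= lv].
  by apply: Pl; rewrite inE gl orbT.
by case Ha: (peval v a) => //=; rewrite negbK lf //= Ha.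
Qed.

Lemma derivable_taut l f : {in l, forall g, derivable g} ->
  (forall v, all (peval v) l -> peval v f) -> derivable f.
Proof. exact: taut_closure (@d_taut _ _ _) (@d_MP _ _ _) l f. Qed.

Definition ded (G : form -> Prop) (f : form) :=
  exists2 l : seq form, {in l, forall g, G g} & derivable (Imp (bigAnd l) f).

Lemma ded_derivable G f : derivable f -> ded G f.
Proof.
move=> df; exists [::] => //.
by apply: (derivable_taut (l := [:: f])) => [g /[!inE]/eqP->|v /= /andP[->]].
Qed.

Lemma ded_in G f : G f -> ded G f.
Proof.
move=> Gf; exists [:: f]; first by move=> g /[!inE]/eqP->.
by apply: d_taut => v /=; case: (peval v f).
Qed.

Lemma ded_mp G a b : ded G a -> ded G (Imp a b) -> ded G b.
Proof.
move=> [la Gla da] [lb Glb db]; exists (la ++ lb).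
  by move=> g; rewrite mem_cat => /orP[/Gla|/Glb].
apply: (derivable_taut (l := [:: Imp (bigAnd la) a; Imp (bigAnd lb) (Imp a b)])).
  by move=> g /[!inE]/orP[]/eqP->.
by move=> v /=; rewrite !peval_bigAnd all_cat andbT; case_bools.
Qed.

Lemma ded_taut G l f : {in l, forall g, ded G g} ->
  (forall v, all (peval v) l -> peval v f) -> ded G f.
Proof. by apply: taut_closure => [g /d_taut/ded_derivable|]; last exact: ded_mp. Qed.

Lemma ded_mono G G' f : (forall g, G g -> G' g) -> ded G f -> ded G' f.
Proof. by move=> GG' [l Gl dl]; exists l => // g /Gl; apply: GG'. Qed.

Lemma ded_deduction G a b : ded (fun g => G g \/ g = a) b -> ded G (Imp a b).
Proof.
move=> [l Gl dl]; exists [seq g <- l | g != a].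
  by move=> g; rewrite mem_filter => /andP[ga /Gl[//|gea]]; rewrite gea eqxx in ga.
apply: (derivable_taut (l := [:: Imp (bigAnd l) b])); first by move=> g /[!inE]/eqP->.
move=> v /=; rewrite !peval_bigAnd andbT.
have l_a : all (peval v) [seq g <- l | g != a] && peval v a ==> all (peval v) l.
  apply/implyP => /andP[/allP la va]; apply/allP => g gl.
  by case: (eqVneq g a) => [->//|ga]; rewrite la // mem_filter ga.
by move: l_a; case_bools.
Qed.

Definition consistent G := ~ ded G Bot.

Definition mcs G := consistent G /\ forall f, G f \/ G (Neg f).

Lemma consistent_Neg f : ~ derivable f -> consistent (fun g => g = Neg f).
Proof.
move=> ndf [l Gl dl]; apply: ndf.
apply: (derivable_taut (l := [:: Imp (bigAnd l) Bot])) => [g /[!inE]/eqP->//|v /=].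
rewrite peval_bigAnd andbT; case: (boolP (peval v f)) => // nf.
by have -> : all (peval v) l by apply/allP => g /Gl->.
Qed.

Lemma mcs_ded G f : mcs G -> ded G f -> G f.
Proof.
move=> [cG G_] df; case: (G_ f) => // Gnf; case: cG.
apply: (ded_taut (l := [:: f; Neg f])) => [g /[!inE]/orP[]/eqP->|v /=]; last by case_bools.
  exact: df.
exact: ded_in.
Qed.

Lemma mcs_derivable G f : mcs G -> derivable f -> G f.
Proof. by move=> mG df; apply: (mcs_ded mG); apply: ded_derivable. Qed.

Lemma mcs_taut G l f : mcs G -> {in l, forall g, G g} ->
  (forall v, all (peval v) l -> peval v f) -> G f.
Proof.
move=> mG Gl lf; apply: (mcs_ded mG); apply: (ded_taut (l := l)) lf => g gl.
exact/ded_in/Gl.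
Qed.

Lemma mcs_Neg G f : mcs G -> G (Neg f) <-> ~ G f.
Proof.
move=> mG; split=> [Gnf Gf|]; last by case: (mG.2 f).
apply: mG.1; apply: (ded_taut (l := [:: f; Neg f])) => [g /[!inE]/orP[]/eqP->|v /=];
  [exact: ded_in..|by case_bools].
Qed.

Lemma mcs_And G a b : mcs G -> G (And a b) <-> G a /\ G b.
Proof.
move=> mG; split=> [Gab|[Ga Gb]].
  by split; apply: (mcs_taut (l := [:: And a b]) mG) => [g /[!inE]/eqP->//|v /=]; case_bools.
by apply: (mcs_taut (l := [:: a; b]) mG) => [g /[!inE]/orP[]/eqP->//|v /=]; case_bools.
Qed.

Lemma mcs_MP G a b : mcs G -> G (Imp a b) -> G a -> G b.
Proof.
move=> mG Gab Ga.
by apply: (mcs_taut (l := [:: Imp a b; a]) mG) => [g /[!inE]/orP[]/eqP->//|v /=]; case_bools.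
Qed.

Lemma mcs_bigOr G (l : seq form) : mcs G -> G (bigOr l) -> exists2 g, g \in l & G g.
Proof.
move=> mG; elim: l => [GBot|g l IHl Gl]; first by case: mG.1; apply: ded_in.
case: (mG.2 g) => [Gg|Gng]; first by exists g; rewrite ?mem_head.
have [|h hl Gh] := IHl; last by exists h; rewrite // inE hl orbT.
apply: (mcs_taut (l := [:: bigOr (g :: l); Neg g]) mG) => [h /[!inE]/orP[]/eqP->//|v /=].
by case_bools.
Qed.

Lemma lindenbaum (T0 : form -> Prop) :
  consistent T0 -> exists2 G, mcs G & forall f, T0 f -> G f.
Proof.
move=> cT0; pose P (S : form -> Prop) := consistent (fun f => T0 f \/ S f).
have [A [PA Amax]] : exists A, P A /\ forall B, classical_sets.proper A B -> ~ P B.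
  apply: classical_sets.Zorn_bigcup => F FP Ftot [l Gl dl].
  have [lT0|[Y FY lY]] := chain_cover Ftot Gl.
    by apply: cT0; exists l.
  by apply: (FP Y FY); exists l.
exists (fun f => T0 f \/ A f) => [|f]; last by left.
split=> // f; apply: contrapT => /not_orP[nf nnf].
have adding_inconsistent g : ~ (T0 g \/ A g) ->
    ded (fun h => (T0 h \/ A h) \/ h = g) Bot.
  move=> ng; apply: contrapT => cg; apply: (Amax (fun h => A h \/ h = g)).
    by split=> [h|/(_ g (or_intror erefl)) Ag_]; [left|apply: ng; right].
  by move=> dB; apply: cg; apply: ded_mono dB => h [|[]]; auto.
apply: PA; apply: (ded_taut (l := [:: Imp f Bot; Imp (Neg f) Bot])); last first.
  by move=> v /=; case: (peval v f).
by move=> g /[!inE]/orP[]/eqP->; apply/ded_deduction/adding_inconsistent.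
Qed.

Lemma derivable_Box_mono (C : {set Ag}) (a b : form) :
  derivable (Imp a b) -> derivable (Imp (Box C a) (Box C b)).
Proof.
move=> dab; have dRE : derivable (Iff (Box C a) (Box C (And b a))).
  apply: d_RE; apply: (derivable_taut (l := [:: Imp a b])) => [g /[!inE]/eqP->//|v /=].
  by case_bools.
apply: (derivable_taut (l := [:: Iff (Box C a) (Box C (And b a));
                               Imp (Box C (And b a)) (Box C b)])).
  by move=> g /[!inE]/orP[]/eqP->; [|apply: d_C1].
by move=> v /=; case_bools.
Qed.

Lemma derivable_Box_subset (C E : {set Ag}) (a : form) :
  C \subset E -> derivable (Imp (Box C a) (Box E a)).
Proof.
move=> CE; have dCEC : [disjoint C & E :\: C] by rewrite disjoints_subset setCD subsetUr.
have <- : C :|: E :\: C = E by rewrite -{2}(setID E C) (setIidPr CE).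
apply: (derivable_taut (l := [:: Box (E :\: C) Top;
    Imp (And (Box C a) (Box (E :\: C) Top)) (Box (C :|: E :\: C) (And a Top));
    Imp (Box (C :|: E :\: C) (And a Top)) (Box (C :|: E :\: C) a)])).
  by move=> g /[!inE]/or3P[]/eqP->; [apply: d_C3|apply: d_C4|apply: d_C1].
by move=> v /=; case_bools.
Qed.

Lemma mcs_Box_mono G (C : {set Ag}) (a b : form) :
  mcs G -> derivable (Imp a b) -> G (Box C a) -> G (Box C b).
Proof. by move=> mG /(derivable_Box_mono C)/(mcs_derivable mG); apply: mcs_MP. Qed.

Section Soundness.
Variable M : model Ag X D.
Local Notation truth := (@truth Ag X D M).
Local Notation join C := (@Defs.join Ag X D M C).

Lemma join_in (C : {set Ag}) alpha beta i (iC : i \in C) : join C alpha beta i = alpha i iC.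
Proof.
rewrite /Defs.join; move: (erefl (i \in C)); set b := {2 3}(i \in C).
by clearbody b; case: b => e; [rewrite (bool_irrelevance e iC)|exfalso; move: iC; rewrite e].
Qed.

Lemma join_out (C : {set Ag}) alpha beta i (niC : i \notin C) :
  join C alpha beta i = beta i niC.
Proof.
rewrite /Defs.join; move: (erefl (i \in C)); set b := {2 3}(i \in C).
by clearbody b; case: b => e; [exfalso; move: niC; rewrite e|rewrite (bool_irrelevance (negbT e) niC)].
Qed.

Lemma join_eq (C : {set Ag}) alpha beta (sg : forall i, Strat M i) :
  (forall i iC, sg i = alpha i iC) -> (forall i niC, sg i = beta i niC) ->
  join C alpha beta = sg.
Proof.
move=> sg_al sg_be; apply: functional_extensionality_dep => i.
by case: (boolP (i \in C)) => iC; [rewrite join_in|rewrite join_out].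
Qed.

Definition some_strat i : Strat M i := inhabited_witness (Strat_inh M i).

Lemma truth_peval s f : peval (fun g => `[< truth s g >]) f = `[< truth s f >].
Proof.
elim: f => //= [|a ->|a -> b ->]; first by rewrite asboolT.
  by rewrite asbool_neg.
by rewrite asbool_and.
Qed.

Lemma truth_Imp s a b : truth s (Imp a b) <-> (truth s a -> truth s b).
Proof. by split=> [nab ta|ab [/ab tb]] //; apply: contrapT => ntb; exact: nab. Qed.

Lemma truth_Iff s a b : truth s (Iff a b) <-> (truth s a <-> truth s b).
Proof. by split=> [[/truth_Imp ab /truth_Imp ba]|[ab ba]] //; split; apply/truth_Imp. Qed.

Lemma truth_bigOr s l g : g \in l -> truth s g -> truth s (bigOr l).
Proof.
elim: l => //= h l IHl; rewrite inE => /orP[/eqP<-|/IHl IH] tg [nh nl] //.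
exact: nl (IH tg).
Qed.

Lemma truth_Box_union s (C E : {set Ag}) a b : [disjoint C & E] ->
  truth s (Box C a) -> truth s (Box E b) -> truth s (Box (C :|: E) (And a b)).
Proof.
move=> dCE [alC HC] [alE HE].
pose al i (_ : i \in C :|: E) :=
  join C alC (fun j _ => join E alE (fun k _ => some_strat k) j) i.
exists al => be; set sg := join _ al be.
have sg_al i (iCE : i \in C :|: E) : sg i = al i iCE by rewrite /sg join_in.
split.
  have <- : join C alC (fun i _ => sg i) = sg.
    apply: join_eq => // i iC; have iCE : i \in C :|: E by rewrite inE iC.
    by rewrite (sg_al i iCE) /al (join_in _ _ iC).
  exact: HC.
have <- : join E alE (fun i _ => sg i) = sg.
  apply: join_eq => // i iE; have niC : i \notin C by rewrite (disjointFl dCE iE).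
  have iCE : i \in C :|: E by rewrite inE iE orbT.
  by rewrite (sg_al i iCE) /al (join_out _ _ niC) (join_in _ _ iE).
exact: HE.
Qed.

Lemma truth_Box_setT s a : ~ truth s (Box set0 (Neg a)) -> truth s (Box setT a).
Proof.
move=> nB; pose al0 i (_ : i \in set0) := some_strat i.
have [be Hbe] : exists be, truth (out M s (join set0 al0 be)) a.
  by apply: contrapT => nbe; apply: nB; exists al0 => be tbe; apply: nbe; exists be.
exists (fun i _ => join set0 al0 be i) => be'.
rewrite (@join_eq setT _ be' (join set0 al0 be)) // => i niT.
by exfalso; move: niT; rewrite in_setT.
Qed.

Lemma soundness f : derivable f -> coherent M -> forall s, truth s f.
Proof.
elim=> {f}.
- by move=> f tf _ s; apply/asboolP; rewrite -truth_peval.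
- by move=> C a b _ s; apply/truth_Imp => -[al H]; exists al => be; case: (H be).
- by move=> C _ s [al /(_ (fun i _ => some_strat i)) /(_ I)].
- by move=> C _ s; exists (fun i _ => some_strat i).
- by move=> C E a b dCE _ s; apply/truth_Imp => -[]; apply: truth_Box_union.
- by move=> a _ s; apply/truth_Imp/truth_Box_setT.
- move=> x cM s; have [[c xc] _] := cM s x.
  by apply: (truth_bigOr (g := Atom x c)) => //; apply: map_f; rewrite mem_enum.
- by move=> x c d cd cM s; apply/truth_Imp => xc; exact: (cM s x).2 c d cd xc.
- by move=> a b _ IHa _ IHab cM s; apply: (truth_Imp _ _ _).1 (IHab cM s) (IHa cM s).
- move=> C a b _ IH cM s; have ab t : truth t a <-> truth t b by apply/truth_Iff/IH.
  by apply/truth_Iff; split=> -[al H]; exists al => be; apply/ab/H.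
Qed.

End Soundness.

Definition claim := ({set Ag} * form)%type.

Record cstrat := CStrat { backs : claim; vetoes : claim; bid : nat }.

Definition idle : cstrat := CStrat (set0, Top) (set0, Top) 0.

Definition dictator (sg : Ag -> cstrat) (d : Ag) :=
  (enum_rank d : nat) = (\sum_i bid (sg i)) %% #|Ag|.

Lemma dictator_unique sg d d' : dictator sg d -> dictator sg d' -> d = d'.
Proof. by move=> dd dd'; apply/enum_rank_inj/val_inj; rewrite /= dd dd'. Qed.

Lemma exists_dictator_bid (sg : nat -> Ag -> cstrat) d :
  (forall n, bid (sg n d) = n) -> (forall n i, i != d -> sg n i = sg 0 i) ->
  exists n, dictator (sg n) d.
Proof.
move=> bid_d sg_i; set R := \sum_(i | i != d) bid (sg 0 i).
have sum_bid n : \sum_i bid (sg n i) = n + R.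
  by rewrite (bigD1 d) //= bid_d; congr (_ + _); apply: eq_bigr => i /sg_i ->.
have k_gt0 : 0 < #|Ag| by apply/card_gt0P; exists d.
(* This bid makes the total [enum_rank d + R * #|Ag|]. *)
exists (enum_rank d + (R * #|Ag| - R)); rewrite /dictator sum_bid -addnA subnK.
  by rewrite addnC modnMDl modn_small.
by rewrite leq_pmulr.
Qed.

Definition backed (G : form -> Prop) (sg : Ag -> cstrat) (p : claim) :=
  G (Box p.1 p.2) /\ forall i, i \in p.1 -> backs (sg i) = p.

Definition vetoed (G : form -> Prop) (sg : Ag -> cstrat) (q : claim) :=
  [/\ exists2 d, dictator sg d & vetoes (sg d) = q, G (Neg (Box q.1 q.2)) &
      forall p, backed G sg p -> p.1 \subset q.1].

Definition outcome_theory G sg f :=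
  (exists2 p, backed G sg p & f = p.2) \/ (exists2 q, vetoed G sg q & f = Neg q.2).

Lemma vetoed_unique G sg q q' : vetoed G sg q -> vetoed G sg q' -> q = q'.
Proof.
by move=> [[d dd <-] _ _] [[d' dd' <-] _ _]; rewrite (dictator_unique dd dd').
Qed.

Definition claimants (ps : seq claim) : {set Ag} := \bigcup_(p <- ps) p.1.

Lemma claimantsP i (ps : seq claim) :
  reflect (exists2 p, p \in ps & i \in p.1) (i \in claimants ps).
Proof.
elim: ps => [|p ps IHps]; first by rewrite /claimants big_nil inE; constructor=> -[].
rewrite /claimants big_cons inE; apply: (iffP orP) => [[ip|/IHps[q qps iq]]|[q]].
- by exists p; rewrite ?mem_head.
- by exists q; rewrite // inE qps orbT.
- by rewrite inE => /orP[/eqP->|qps iq]; [left|right; apply/IHps; exists q].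
Qed.

Lemma mcs_Box_backed G sg (ps : seq claim) : mcs G -> {in ps, forall p, backed G sg p} ->
  G (Box (claimants ps) (bigAnd (map snd ps))).
Proof.
move=> mG; elim: ps => [_|p ps IHps backed_ps].
  by rewrite /claimants big_nil; apply/(mcs_derivable mG)/d_C3.
have [Gp p_backs] := backed_ps p (mem_head _ _).
have /IHps Gps : {in ps, forall q, backed G sg q}.
  by move=> q qps; apply: backed_ps; rewrite inE qps orbT.
rewrite /claimants big_cons -/(claimants ps) /=.
case: (boolP (p \in ps)) => [pps|npps].
  have -> : p.1 :|: claimants ps = claimants ps.
    by apply/setUidPr/subsetP => i ip; apply/claimantsP; exists p.
  apply: mcs_Box_mono mG _ Gps; apply: d_taut => v /=; rewrite peval_bigAnd.
  by case: (boolP (all _ _)) => //= /allP->; rewrite ?map_f.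
have dps : [disjoint p.1 & claimants ps].
  apply/pred0P => i /=; apply/negP => /andP[ip /claimantsP[q qps iq]].
  have [_ /(_ i iq)] : backed G sg q by apply: backed_ps; rewrite inE qps orbT.
  by rewrite p_backs // => pq; rewrite pq qps in npps.
apply: (mcs_taut (l := [:: Box p.1 p.2; Box (claimants ps) (bigAnd (map snd ps));
  Imp (And (Box p.1 p.2) (Box (claimants ps) (bigAnd (map snd ps))))
      (Box (p.1 :|: claimants ps) (And p.2 (bigAnd (map snd ps))))]) mG).
  by move=> g /[!inE]/or3P[]/eqP-> //; apply/(mcs_derivable mG)/d_C4.
by move=> v /=; case_bools.
Qed.

Lemma mcs_Box_ded G sg (C : {set Ag}) f :
  mcs G -> (forall p, backed G sg p -> p.1 \subset C) ->
  ded (fun g => exists2 p, backed G sg p & g = p.2) f -> G (Box C f).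
Proof.
move=> mG subC [l /exists_seq_preimage[ps backed_ps ->] dl].
have sub_ps : claimants ps \subset C.
  by apply/subsetP => i /claimantsP[p /backed_ps/subC/subsetP]; apply.
apply: (mcs_MP mG (mcs_derivable mG (derivable_Box_subset f sub_ps))).
exact: mcs_Box_mono mG dl (mcs_Box_backed mG backed_ps).
Qed.

Lemma outcome_consistent G sg : mcs G -> consistent (outcome_theory G sg).
Proof.
move=> mG dBot; pose B g := exists2 p, backed G sg p & g = p.2.
have [[q vq]|nv] := EM (exists q, vetoed G sg q).
  have [_ Gnq subq] := vq.
  have dq : ded B (Imp (Neg q.2) Bot).
    apply: ded_deduction; apply: ded_mono dBot => g [Bg|[q' vq' ->]]; first by left.
    by right; rewrite (vetoed_unique vq' vq).
  have : ded B q.2.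
    apply: (ded_taut (l := [:: Imp (Neg q.2) Bot])) => [g /[!inE]/eqP->//|v /=].
    by case_bools.
  by move=> /(mcs_Box_ded mG subq); apply/(mcs_Neg _ mG).
have : G (Box setT Bot).
  apply: (mcs_Box_ded (sg := sg) mG) => [p _|]; first exact: subsetT.
  by apply: ded_mono dBot => g [//|[q vq _]]; case: nv; exists q.
by apply/(mcs_Neg _ mG)/(mcs_derivable mG)/d_C2.
Qed.

Definition canonical_state := {G : form -> Prop | mcs G}.

Definition canonical_outcome (s : canonical_state) (sg : Ag -> cstrat) : canonical_state :=
  let: exist2 G mG _ := cid2 (lindenbaum (outcome_consistent (sg := sg) (svalP s))) in
  exist _ G mG.

Lemma canonical_outcome_spec s sg f :
  outcome_theory (sval s) sg f -> sval (canonical_outcome s sg) f.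
Proof. by rewrite /canonical_outcome; case: cid2 => G mG sub /sub. Qed.

Section CanonicalModel.
Variable w : inhabited canonical_state.

Definition canonical_model : model Ag X D :=
  @Model Ag X D canonical_state w (fun _ => cstrat) (fun _ => inhabits idle)
    canonical_outcome (fun x c s => sval s (Atom x c)).

Local Notation join C := (@Defs.join Ag X D canonical_model C).
Local Notation outcome := canonical_outcome.

Lemma canonical_Box_intro (s : canonical_state) (C : {set Ag}) a : sval s (Box C a) ->
  exists al, forall be, sval (outcome s (join C al be)) a.
Proof.
move=> GB; exists (fun i _ => CStrat (C, a) (set0, Top) 0) => be.
apply: canonical_outcome_spec; left; exists (C, a) => //; split=> // i iC.
by rewrite (join_in _ _ iC).
Qed.

Lemma canonical_veto (s : canonical_state) (C : {set Ag}) a d : d \notin C -> sval s (Neg (Box C a)) ->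
  forall al, exists be, sval (outcome s (join C al be)) (Neg a).
Proof.
move=> nCd GnB al.
pose be n i (_ : i \notin C) := if i == d then CStrat (set0, Top) (C, a) n else idle.
pose sg n := join C al (be n).
have idle_out n i : i \notin C -> backs (sg n i) = (set0, Top).
  by move=> niC; rewrite /sg (join_out _ _ niC) /be; case: eqP.
have [n dn] : exists n, dictator (sg n) d.
  apply: exists_dictator_bid => [n|n i id]; first by rewrite /sg (join_out _ _ nCd) /be eqxx.
  case: (boolP (i \in C)) => iC; first by rewrite /sg !(join_in _ _ iC).
  by rewrite /sg !(join_out _ _ iC) /be (negbTE id).
exists (be n); apply: canonical_outcome_spec; right; exists (C, a) => //; split=> //.
  by exists d; rewrite // (join_out _ _ nCd) /be eqxx.
move=> p [_ p_backs]; apply/subsetP => i ip; apply: contraT => niC.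
by have := p_backs i ip; rewrite idle_out // => p_idle; rewrite -p_idle inE in ip.
Qed.

Lemma canonical_Box_elim (s : canonical_state) (C : {set Ag}) a : ~ sval s (Box C a) ->
  forall al, exists be, ~ sval (outcome s (join C al be)) a.
Proof.
move=> nGB al; have mG := svalP s.
suff [be Gna] : exists be, sval (outcome s (join C al be)) (Neg a).
  by exists be; apply/(mcs_Neg _ (svalP _)).
case: (boolP ([set: Ag] \subset C)) => [|/subsetPn[d _ nCd]]; last first.
  by apply: canonical_veto nCd _ _; apply/(mcs_Neg _ mG).
rewrite subTset => /eqP CT; rewrite CT in nGB al *.
have G0 : sval s (Box set0 (Neg a)).
  case: (mG.2 (Box set0 (Neg a))) => // Gn0; case: nGB.
  exact: (mcs_MP mG (mcs_derivable mG (d_C5 a)) Gn0).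
exists (fun i _ => idle); apply: canonical_outcome_spec; left.
by exists (set0, Neg a) => //; split=> // i; rewrite inE.
Qed.

Lemma canonical_truth f (s : canonical_state) : truth canonical_model s f <-> sval s f.
Proof.
elim: f s => [|x c|a IHa|a IHa b IHb|C a IHa] s /=; have mG := svalP s.
- by split=> // _; apply/(mcs_derivable mG)/d_taut.
- by [].
- by rewrite IHa (mcs_Neg _ mG).
- by rewrite IHa IHb (mcs_And _ _ mG).
split=> [[al Hal]|/canonical_Box_intro[al Hal]]; last by exists al => be; apply/IHa/Hal.
apply: contrapT => /canonical_Box_elim/(_ al)[be]; apply; exact/IHa/Hal.
Qed.

Lemma canonical_coherent : coherent canonical_model.
Proof.
move=> s x; have mG := svalP s; split.
  have [_ /mapP[c _ ->] Gc] := mcs_bigOr mG (mcs_derivable mG (d_cov Ag X D x)).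
  by exists c.
move=> c d cd /= Gc; apply/(mcs_Neg _ mG).
exact: (mcs_MP mG (mcs_derivable mG (d_excl Ag X D x c d cd)) Gc).
Qed.

End CanonicalModel.

End CoalitionLogic.

Theorem mainTheorem8 (Ag X : finType) (D : X -> finType)
  (HAg : 0 < #|Ag|) (HD : forall x : X, 0 < #|D x|) (chi : @form Ag X D) :
  (forall (M : @model Ag X D), coherent M -> forall s : St M, @truth Ag X D M s chi)
  <-> @derivable Ag X D chi.
Proof.
split=> [valid|dchi M cM s]; last exact: soundness.
apply: contrapT => /consistent_Neg/lindenbaum[G mG /(_ _ erefl) Gnchi].
pose s : canonical_state Ag D := exist _ G mG.
have /canonical_truth : truth (canonical_model (inhabits s)) s chi.
  exact/valid/canonical_coherent.
by apply/(mcs_Neg _ mG).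
Qed.
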